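(* Let $n\ge1$ and let $\alpha=(a_n,\ldots,a_1)$ be a restricted sequence. Write $e'_\alpha=\sum_{\beta}P_\beta\, e_\beta$ with $P_\beta\in\mathbb{Q}(q)$, the sum over restricted sequences $\beta$ of length $n$. Then $P_\beta\neq0$ if and only if $\beta\preccurlyeq\alpha$.
   Context: $D_n$: non-crossing perfect matchings of $\{1,\ldots,2n\}$ (non-crossing $n$-chord diagrams), $D_0=\{\phi\}$. For $1\le k\le 2n+1$, $l_k:D_n\to D_{n+1}$: $l_k(\alpha)$ matches $k$ with $k+1$, old point $i$ becomes $i$ if $i<k$ and $i+2$ if $i\ge k$. Restricted sequence of $\alpha\in D_n$: let $k_n$ be the smallest $k$ with $k$ matched to $k+1$; it is $(k_n,k_{n-1},\ldots,k_1)$ with $(k_{n-1},\ldots,k_1)$ the restricted sequence of $\alpha$ with that arc removed (empty for $\phi$). This is a bijection from $D_n$ to restricted sequences of length $n$; $e_{(a_n,\ldots,a_1)}$ denotes the corresponding diagram. $\preccurlyeq$ is the coordinatewise order on restricted sequences: $(b_n,\ldots,b_1)\preccurlyeq(a_n,\ldots,a_1)$ iff $b_i\le a_i$ for all $i$. $V_n$: $\mathbb{Q}(q)$-vector space with basis $D_n$, $l_k$ extended linearly. $\Delta_{-1}=0$, $\Delta_0=1$, $\Delta_k=q\Delta_{k-1}-\Delta_{k-2}$. $e'$: $e'_{(1)}=e_{(1)}$; for $n\ge2$, $e'_{(a_n,\ldots,a_1)}=l_{a_n}(e'_{(a_{n-1},\ldots,a_1)})-\frac{\Delta_{a_n-2}}{\Delta_{a_n-1}}e'_{(a_n-1,a_{n-1},\ldots,a_1)}$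 if $a_n\ge2$, and $e'_{(1,a_{n-1},\ldots,a_1)}=l_1(e'_{(a_{n-1},\ldots,a_1)})$. *)

From HB Require Import structures.
From mathcomp Require Import all_boot all_order all_algebra fraction.
Set Implicit Arguments. Unset Strict Implicit. Unset Printing Implicit Defensive.
Import Order.TTheory GRing.Theory Num.Theory.

Definition Qq : fieldType := {fraction {poly rat}}.

(* Chord diagrams on points 1..2n are encoded by their "partner word":
   a sequence s of length 2n whose (i-1)-th entry is the point matched to i. *)
Definition partner (s : seq nat) (i : nat) : nat := nth 0%N s i.-1.

Definition is_matching (n : nat) (s : seq nat) : bool :=
  (size s == 2 * n)%N &&
  all (fun i => [&& (0 < partner s i <= 2 * n)%N, partner s i != i
                  & partner s (partner s i) == i]) (iota 1 (2 * n)).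

Definition noncrossing (n : nat) (s : seq nat) : bool :=
  all (fun i => all (fun j => ~~ [&& (i < j)%N, (j < partner s i)%N & (partner s i < partner s j)%N])
                    (iota 1 (2 * n))) (iota 1 (2 * n)).

Definition is_diagram (n : nat) (s : seq nat) : bool :=
  is_matching n s && noncrossing n s.

(* l_k on diagrams: k is matched with k+1, old point i becomes i if i < k and
   i + 2 if i >= k. *)
Definition shiftk (k p : nat) : nat := if (p < k)%N then p else (p + 2)%N.
Definition lk (k : nat) (s : seq nat) : seq nat :=
  let t := map (shiftk k) s in take k.-1 t ++ [:: k.+1; k] ++ drop k.-1 t.

Definition unshiftk (k p : nat) : nat := if (p < k)%N then p else (p - 2)%N.
Definition remove_arc (k : nat) (s : seq nat) : seq nat :=
  map (unshiftk k) (take k.-1 s ++ drop k.+1 s).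

(* smallest k such that k is matched with k+1 *)
Definition first_adj (s : seq nat) : nat :=
  (find (fun i => nth 0%N s i == i.+2) (iota 0 (size s))).+1.

(* restricted sequence (k_n, ..., k_1) of a diagram in D_n (list head = k_n) *)
Fixpoint rseq_aux (fuel : nat) (s : seq nat) : seq nat :=
  match fuel with
  | 0 => [::]
  | f.+1 => let k := first_adj s in k :: rseq_aux f (remove_arc k s)
  end.
Definition rseq (s : seq nat) : seq nat := rseq_aux (size s)./2 s.

Fixpoint restricted (a : seq nat) : bool :=
  match a with
  | [::] => true
  | [:: x] => x == 1%N
  | x :: ((y :: _) as r) => (0 < x <= y.+1)%N && restricted r
  end.

Definition rs_le (b a : seq nat) : bool := all2 (fun x y => (x <= y)%N) b a.

(* Elements of V_n: formal Q(q)-linear combinations of diagrams. *)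
Definition vec := seq (Qq * seq nat).
Definition vscale (c : Qq) (v : vec) : vec := map (fun t => (c * t.1, t.2)%R) v.
Definition vsub (v w : vec) : vec := v ++ vscale (-1)%R w.
Definition vl (k : nat) (v : vec) : vec := map (fun t => (t.1, lk k t.2)) v.
Definition coeff (v : vec) (d : seq nat) : Qq :=
  (\sum_(t <- v | t.2 == d) t.1)%R.

Fixpoint Delta (k : nat) : {poly rat} :=
  match k with
  | 0 => 1%R
  | 1 => 'X
  | (j.+1 as k1).+1 => ('X * Delta k1 - Delta j)%R
  end.

Definition ratD (a : nat) : Qq := (tofrac (Delta (a - 2)) / tofrac (Delta (a - 1)))%R.

(* e'_alpha, alpha = [:: a_n; ...; a_1].  e'_{()} = phi, so e'_{(1)} = l_1 phi
   = e_{(1)}. *)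
Fixpoint eprime (a : seq nat) : vec :=
  match a with
  | [::] => [:: (1%R, [::])]
  | x :: r =>
      let E := eprime r in
      (fix g (m : nat) : vec :=
         match m with
         | 0 => [::]
         | 1 => vl 1 E
         | (m'.+1) as m1 => vsub (vl m1 E) (vscale (ratD m1) (g m'))
         end) x
  end.

Example lk_ex : lk 1 [::] = [:: 2; 1]%N. Proof. reflexivity. Qed.
Example rseq_ex : rseq [:: 4; 3; 2; 1]%N = [:: 2; 1]%N. Proof. reflexivity. Qed.
Example rseq_ex2 : rseq [:: 2; 1; 4; 3]%N = [:: 1; 1]%N. Proof. reflexivity. Qed.
Example lk_ex2 : lk 2 [:: 2; 1]%N = [:: 4; 3; 2; 1]%N. Proof. reflexivity. Qed.
Example diag_ex : is_diagram 2 [:: 4; 3; 2; 1]%N && ~~ is_diagram 2 [:: 3; 4; 1; 2]%N.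
Proof. by vm_compute. Qed.

(* At q = 2 one has Delta_k(2) = k + 1 > 0, so every coefficient
   Delta_{a-2}/Delta_{a-1} of the recursion is a quotient of polynomials that are
   positive at 2.  By induction on alpha and on its first entry, the coefficient
   of e_beta in e'_alpha vanishes unless beta <= alpha, and otherwise equals
   (-1)^(|alpha| + |beta|) times such a quotient, hence is nonzero: in
   e'_(a, alpha') = l_a (e'_alpha') - Delta_{a-2}/Delta_{a-1} e'_(a-1, alpha')
   the two contributions to a given e_beta carry the same sign.  The combinatorial
   input is how l_a acts on restricted sequences: if beta' <= alpha' and
   (a, alpha') is restricted, then the restricted sequence of l_a (e_beta') is
   <= (a, alpha') and its entry sum has the parity of a + |beta'|.  This follows
   from the commutation l_j l_k = l_k l_(j-2) (j >= k + 2), which moves the new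
   arc past the first short arc of e_beta'. *)

From HB Require Import structures.
From mathcomp Require Import all_boot all_order all_algebra fraction.
From mathcomp Require Import zify ring.
Set Implicit Arguments. Unset Strict Implicit. Unset Printing Implicit Defensive.
Import Order.TTheory GRing.Theory Num.Theory.

Section Shift.
Variable k : nat.

Lemma shiftk_small p : p < k -> shiftk k p = p.
Proof. by rewrite /shiftk => ->. Qed.

Lemma shiftk_large p : k <= p -> shiftk k p = p + 2.
Proof. by rewrite /shiftk ltnNge => ->. Qed.

Lemma ltn_shiftk a b : (shiftk k a < shiftk k b) = (a < b).
Proof. by rewrite /shiftk; case: (ltnP a k) => ?; case: (ltnP b k) => ?; lia. Qed.

Lemma shiftk_inj : injective (shiftk k).
Proof.
by move=> a b; rewrite /shiftk; case: (ltnP a k) => ?; case: (ltnP b k) => ?; lia.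
Qed.

Lemma shiftkK : cancel (shiftk k) (unshiftk k).
Proof.
by move=> a; rewrite /shiftk /unshiftk; case: (ltnP a k) => ?; case: ltnP => ?; lia.
Qed.

Lemma unshiftkK p : p != k -> p != k.+1 -> shiftk k (unshiftk k p) = p.
Proof. by rewrite /shiftk /unshiftk; case: (ltnP p k) => ?; case: ltnP => ?; lia. Qed.

Lemma shiftk_gt0 a : 0 < k -> (0 < shiftk k a) = (0 < a).
Proof. by rewrite /shiftk; case: (ltnP a k) => ?; lia. Qed.

Lemma shiftk_comm i p : k <= i -> shiftk i.+2 (shiftk k p) = shiftk k (shiftk i p).
Proof.
by rewrite /shiftk; case: (ltnP p k) => ?; case: (ltnP p i) => ?; do ?case: ifP; lia.
Qed.

Lemma leq_shiftk m a : k <= m.+1 -> (shiftk k a <= m.+2) = (a <= m).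
Proof. by rewrite /shiftk; case: (ltnP a k) => ?; lia. Qed.

End Shift.

Lemma dropl_cat (T : Type) n (s1 s2 : seq T) :
  n <= size s1 -> drop n (s1 ++ s2) = drop n s1 ++ s2.
Proof.
rewrite drop_cat leq_eqVlt => /orP [/eqP ->|-> //].
by rewrite ltnn subnn drop0 drop_size.
Qed.

Lemma size_lk k s : size (lk k s) = (size s).+2.
Proof. by rewrite /lk !size_cat /= size_take size_drop size_map; case: ltnP; lia. Qed.

Lemma lkK k s : 0 < k -> k.-1 <= size s -> remove_arc k (lk k s) = s.
Proof.
move=> k0 hk; have ht : size (take k.-1 (map (shiftk k) s)) = k.-1.
  by rewrite size_takel // size_map.
rewrite /remove_arc /lk catA takel_cat ?size_cat ?ht ?leq_addr //.
rewrite take_size_cat // drop_size_cat ?size_cat ?ht /=; last by lia.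
by rewrite cat_take_drop mapK //; apply: shiftkK.
Qed.

Lemma matching_involution n s : is_matching n s -> size s = 2 * n /\
  forall i, 0 < i <= 2 * n ->
   [/\ 0 < partner s i <= 2 * n, partner s i != i & partner s (partner s i) = i].
Proof.
case/andP => /eqP hs /allP h; split => // i hi.
have /and3P [h1 h2 /eqP h3] : [&& 0 < partner s i <= 2 * n, partner s i != i
    & partner s (partner s i) == i] by apply: h; rewrite mem_iota; lia.
by split.
Qed.

Lemma partner_gt0_le_size s i : 0 < partner s i -> i <= size s.
Proof.
by rewrite /partner; case: (leqP i (size s)) => // h; rewrite nth_default //; lia.
Qed.

Lemma matching_arc n s k : is_matching n s -> 0 < k -> partner s k = k.+1 ->
  [/\ k < size s, partner s k.+1 = k &
   forall a, 0 < a <= 2 * n -> a != k -> a != k.+1 ->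
     partner s a != k /\ partner s a != k.+1].
Proof.
move=> /matching_involution [hs hm] k0 hk.
have kn : k <= 2 * n by rewrite -hs partner_gt0_le_size ?hk.
have [hk1 _ hkk] := hm k ltac:(lia); rewrite hk in hk1 hkk.
split=> // [|a ha hak hak1]; first by rewrite hs; case: (hm k.+1); lia.
have [_ _ haa] := hm a ha.
by split; apply/eqP => hpa; move: haa; rewrite hpa ?hkk ?hk; lia.
Qed.

Lemma remove_arcK n k s : is_matching n s -> 0 < k -> partner s k = k.+1 ->
  lk k (remove_arc k s) = s.
Proof.
move=> hm k0 hk; have [hks hk1 other] := matching_arc hm k0 hk.
have hs := (matching_involution hm).1.
have hsk : size (take k.-1 s) = k.-1 by rewrite size_takel //; lia.
set x := take k.-1 s ++ drop k.+1 s.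
have hx : map (shiftk k) (map (unshiftk k) x) = x.
  rewrite -map_comp map_id_in // => p; rewrite mem_cat.
  case/orP => /(nthP 0) [i]; rewrite ?hsk ?size_drop ?hs => hi <-.
  - rewrite nth_take //.
    by have [] := other i.+1 ltac:(lia) ltac:(lia) ltac:(lia); apply: unshiftkK.
  - rewrite nth_drop.
    by have [] := other (k.+1 + i).+1 ltac:(lia) ltac:(lia) ltac:(lia); apply: unshiftkK.
rewrite /lk /remove_arc hx take_size_cat // drop_size_cat //.
rewrite -[RHS](cat_take_drop k.-1 s) [drop k.-1 s](drop_nth 0) ?prednK //; last by lia.
have e1 : nth 0 s k.-1 = k.+1 := hk; have e2 : nth 0 s k = k := hk1.
by rewrite [drop k s](drop_nth 0) // e1 e2.
Qed.

Lemma lk_comm j k s : 0 < k -> k.+2 <= j -> j <= (size s).+3 ->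
  lk j (lk k s) = lk k (lk (j - 2) s).
Proof.
move=> k0 hkj hj.
set u := map (shiftk j \o shiftk k) s.
have hu : map (shiftk k \o shiftk (j - 2)) s = u.
  by apply: eq_map => p; rewrite /= -shiftk_comm; [congr shiftk; lia | lia].
have su : size u = size s by rewrite size_map.
rewrite [lk j _]/lk [lk k (lk _ _)]/lk.
have -> : map (shiftk j) (lk k s) = (take k.-1 u ++ [:: k.+1; k]) ++ drop k.-1 u.
  rewrite /lk -catA !map_cat map_take map_drop -map_comp /=.
  by rewrite !shiftk_small //; lia.
have -> : map (shiftk k) (lk (j - 2) s) =
    take (j - 2).-1 u ++ [:: j.+1; j] ++ drop (j - 2).-1 u.
  rewrite /lk !map_cat map_take map_drop -map_comp hu /=.
  have e1 : (j - 2).+1 + 2 = j.+1 by lia.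
  have e2 : j - 2 + 2 = j by lia.
  by rewrite !shiftk_large ?e1 ?e2 //; lia.
have sA : size (take k.-1 u ++ [:: k.+1; k]) = k.+1.
  by rewrite size_cat size_takel /=; lia.
rewrite take_cat drop_cat sA !ifF; try lia.
rewrite -catA takel_cat ?take_takel ?dropl_cat ?size_takel; try lia.
have e : j.-1 - k.+1 + k.-1 = (j - 2).-1 by lia.
by rewrite take_drop drop_drop e -!catA.
Qed.

Lemma remove_arc_lk n k j s : is_matching n s -> 0 < k -> partner s k = k.+1 ->
  k.+2 <= j -> j <= (size s).+1 -> remove_arc k (lk j s) = lk (j - 2) (remove_arc k s).
Proof.
move=> hm k0 hk hkj hj; have hs := remove_arcK hm k0 hk.
have hsz : size s = (size (remove_arc k s)).+2 by rewrite -{1}hs size_lk.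
have [hks _ _] := matching_arc hm k0 hk.
by rewrite -{1}hs lk_comm ?lkK ?size_lk //; lia.
Qed.

Lemma nth_map_shiftk k s i : 0 < k ->
  nth 0 (map (shiftk k) s) i = shiftk k (nth 0 s i).
Proof.
move=> k0; case: (ltnP i (size s)) => hi; first by rewrite (nth_map 0).
by rewrite !nth_default ?size_map ?shiftk_small.
Qed.

Lemma nth_lk k s i : 0 < k -> k.-1 <= size s ->
  nth 0 (lk k s) (shiftk k.-1 i) = shiftk k (nth 0 s i).
Proof.
move=> k0 hk; have ht : size (take k.-1 (map (shiftk k) s)) = k.-1.
  by rewrite size_takel // size_map.
rewrite /lk nth_cat ht; case: (ltnP i k.-1) => hi.
  by rewrite shiftk_small // hi nth_take // nth_map_shiftk.
rewrite shiftk_large // ifF; last by lia.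
have -> : i + 2 - k.-1 = (i - k.-1).+2 by lia.
by rewrite /= nth_drop subnKC // nth_map_shiftk.
Qed.

Lemma partner_lk k s a : 0 < k -> k.-1 <= size s -> 0 < a ->
  partner (lk k s) (shiftk k a) = shiftk k (partner s a).
Proof.
move=> k0 hk a0; rewrite /partner -nth_lk //; congr nth.
by rewrite /shiftk; case: (ltnP a k) => ?; case: ifP; lia.
Qed.

Lemma partner_lk_arc k s : k.-1 <= size s -> partner (lk k s) k = k.+1.
Proof.
move=> hk; rewrite /partner /lk nth_cat size_takel ?size_map // ltnn.
by rewrite subnn.
Qed.

Lemma first_adj_leq s : first_adj s <= (size s).+1.
Proof. by rewrite /first_adj ltnS -[X in _ <= X](size_iota 0) find_size. Qed.

Lemma before_first_adj s l : 0 < l < first_adj s -> partner s l != l.+1.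
Proof.
case: l => // l /andP [_]; rewrite ltnS => hl.
have hs : l < size s by apply: leq_trans hl _; rewrite -ltnS first_adj_leq.
by have := before_find 0 hl; rewrite nth_iota // add0n => /negbT.
Qed.

Lemma partner_first_adj s : first_adj s <= size s ->
  partner s (first_adj s) = (first_adj s).+1.
Proof.
rewrite /first_adj /partner /= => hs.
have hfind : has (fun i => nth 0 s i == i.+2) (iota 0 (size s)).
  by rewrite has_find size_iota.
by have /eqP := nth_find 0 hfind; rewrite nth_iota ?add0n.
Qed.

Lemma first_adj_eq s k : 0 < k -> partner s k = k.+1 ->
  (forall l, 0 < l < k -> partner s l != l.+1) -> first_adj s = k.
Proof.
case: k => // k _ hk hbefore; rewrite /first_adj; congr _.+1.
have hks : k < size s by apply: partner_gt0_le_size; rewrite hk.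
have hfind : has (fun i => nth 0 s i == i.+2) (iota 0 (size s)).
  by apply/hasP; exists k; rewrite ?mem_iota ?hk //=; apply/eqP.
set P := fun i => nth 0 s i == i.+2.
case: (ltngtP (find P (iota 0 (size s))) k) => // hlt.
- have := nth_find 0 hfind; rewrite nth_iota ?add0n; last first.
    by apply: ltn_trans hks.
  by move: (hbefore (find P (iota 0 (size s))).+1 hlt) => /negPf ->.
- have hk' : nth 0 s k = k.+2 := hk.
  by have := before_find 0 hlt; rewrite nth_iota // add0n /P hk' eqxx.
Qed.

Lemma partner_lk_small j s l : 0 < l < j -> j.-1 <= size s ->
  partner (lk j s) l = shiftk j (partner s l).
Proof.
by case/andP=> l0 hl hj; rewrite -{1}(shiftk_small hl) partner_lk //; lia.
Qed.

Lemma first_adj_lk_small j s : 0 < j -> j <= (size s).+1 -> j <= (first_adj s).+1 ->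
  first_adj (lk j s) = j.
Proof.
move=> j0 hj hjf; apply: first_adj_eq => // [|l hl].
  by rewrite partner_lk_arc //; lia.
rewrite partner_lk_small //; last by lia.
case/andP: hl => l0 hl; case: (ltnP (partner s l) j) => hp.
  rewrite shiftk_small //; case: (ltnP l (first_adj s)) => hlf.
    by rewrite before_first_adj ?l0.
  by apply/eqP; lia.
by rewrite shiftk_large //; lia.
Qed.

Lemma first_adj_lk_large j s : first_adj s <= size s -> (first_adj s).+2 <= j ->
  j <= (size s).+1 -> first_adj (lk j s) = first_adj s.
Proof.
set k := first_adj s => hks hkj hj; apply: first_adj_eq => // [|l hl].
  have k0 : 0 < k by [].
  by rewrite partner_lk_small ?partner_first_adj ?shiftk_small //; lia.
case/andP: hl => l0 hlk; rewrite partner_lk_small; try lia.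
case: (ltnP (partner s l) j) => hp; last by rewrite shiftk_large //; lia.
by rewrite shiftk_small // before_first_adj ?l0.
Qed.

Lemma diagram_size n s : is_diagram n s -> size s = 2 * n.
Proof. by case/andP => /matching_involution []. Qed.

Lemma diagram_lk_inv n k s : 0 < k -> k <= (size s).+1 ->
  is_diagram n.+1 (lk k s) -> is_diagram n s.
Proof.
move=> k0 hk /andP [hm hnc]; have [hs hmx] := matching_involution hm.
have sz : size s = 2 * n by move: hs; rewrite size_lk; lia.
have hk1 : k.-1 <= size s by lia.
have range m a : (a \in iota 1 (2 * m)) = (0 < a <= 2 * m).
  by rewrite mem_iota add1n ltnS.
have srange a : (0 < shiftk k a <= 2 * n.+1) = (0 < a <= 2 * n).
  by rewrite shiftk_gt0 // mulnS add2n leq_shiftk //; lia.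
have PF a : 0 < a -> partner (lk k s) (shiftk k a) = shiftk k (partner s a).
  exact: partner_lk.
apply/andP; split.
  rewrite /is_matching sz eqxx; apply/allP => a; rewrite range => ha.
  have [] := hmx (shiftk k a); first by rewrite srange.
  rewrite PF; last by case/andP: ha.
  rewrite srange (inj_eq (@shiftk_inj k)) => hp ->.
  rewrite PF; last by case/andP: hp.
  by move=> /shiftk_inj ->; rewrite hp eqxx.
move/allP: hnc => hnc.
apply/allP => a; rewrite range => ha; apply/allP => b; rewrite range => hb.
have := hnc (shiftk k a); rewrite range srange ha => /(_ isT) /allP.
move=> /(_ (shiftk k b)); rewrite range srange hb => /(_ isT).
by rewrite !PF ?ltn_shiftk //; [case/andP: hb | case/andP: ha].
Qed.

Lemma rseq_auxS n s :
  rseq_aux n.+1 s = first_adj s :: rseq_aux n (remove_arc (first_adj s) s).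
Proof. by []. Qed.

Lemma rseq_lk_small n j s : 0 < j -> j <= (size s).+1 -> j <= (first_adj s).+1 ->
  rseq_aux n.+1 (lk j s) = j :: rseq_aux n s.
Proof. by move=> j0 hj hjf; rewrite rseq_auxS first_adj_lk_small // lkK //; lia. Qed.

Lemma rseq_lk_large m n j s : is_matching m s -> first_adj s <= size s ->
  (first_adj s).+2 <= j -> j <= (size s).+1 ->
  rseq_aux n.+1 (lk j s) =
  first_adj s :: rseq_aux n (lk (j - 2) (remove_arc (first_adj s) s)).
Proof.
move=> hm hks hkj hj.
by rewrite rseq_auxS first_adj_lk_large // (remove_arc_lk hm) ?partner_first_adj.
Qed.

Lemma rs_le_cons x y b a : rs_le (y :: b) (x :: a) = (y <= x) && rs_le b a.
Proof. by []. Qed.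

Lemma restricted_cons2 x y r :
  restricted [:: x, y & r] = (0 < x <= y.+1) && restricted (y :: r).
Proof. by []. Qed.

Lemma restricted_gt0 x r : restricted (x :: r) -> 0 < x.
Proof. by case: r => [/eqP ->|y r /andP [/andP []]]. Qed.

Lemma restricted_head_pred x r :
  0 < x -> restricted (x.+1 :: r) -> restricted (x :: r).
Proof.
case: r => [|y r] x0; first by case: x x0.
by rewrite !restricted_cons2 => /andP [/andP [_ h] ->]; rewrite andbT x0 ltnW.
Qed.

Lemma restricted_tail x r : restricted (x :: r) -> restricted r.
Proof. by case: r => // y r /andP []. Qed.

Lemma restricted_head x r : restricted (x :: r) -> x <= (size r).+1.
Proof.
elim: r x => [x /eqP -> //|y r IH x /andP [/andP [_ hxy] /IH]] /=; lia.
Qed.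

Lemma diagram_remove_arc n k s : is_diagram n.+1 s -> 0 < k -> partner s k = k.+1 ->
  is_diagram n (remove_arc k s).
Proof.
move=> hd k0 hk; have [hm _] := andP hd; have [hks _ _] := matching_arc hm k0 hk.
have hs := remove_arcK hm k0 hk.
have sz : size s = (size (remove_arc k s)).+2 by rewrite -{1}hs size_lk.
by apply: (diagram_lk_inv k0); rewrite ?hs //; lia.
Qed.

Lemma rseq_lk n s r j : is_diagram n s -> size r = n ->
  rs_le (rseq_aux n s) r -> restricted (j :: r) ->
  rs_le (rseq_aux n.+1 (lk j s)) (j :: r) /\
  odd (sumn (rseq_aux n.+1 (lk j s))) = odd (j + sumn (rseq_aux n s)).
Proof.
elim: n s r j => [|n IH] s r j hd hr hle hjr.
  by move: hd hr hjr => /diagram_size /size0nil -> /size0nil -> /eqP ->.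
have hs := diagram_size hd.
case: r hr hle hjr => // x r [hr]; rewrite rseq_auxS rs_le_cons.
set k := first_adj s; set s2 := remove_arc k s.
move=> /andP [hkx hle] hjr.
have /andP [/andP [j0 hjx] hxr] := hjr.
have hxn := restricted_head hxr.
have hks : k <= size s by rewrite hs; lia.
have hk : partner s k = k.+1 by apply: partner_first_adj.
case: (leqP j k.+1) => hjk.
  by rewrite rseq_lk_small ?rs_le_cons ?rseq_auxS ?leqnn ?hkx ?hle //; lia.
have [hm _] := andP hd.
rewrite (rseq_lk_large _ hm) //; last by lia.
have hd2 : is_diagram n s2 by apply: diagram_remove_arc.
have k0 : 0 < k by [].
have hjr2 : restricted (j - 2 :: r).
  case: (r) hxr => [/eqP|y r']; first lia.
  rewrite !restricted_cons2 => /andP [/andP [_ hxy] hr'].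
  by apply/andP; split; [lia | exact: hr'].
have [] := IH s2 r (j - 2) hd2 hr hle hjr2.
set t := rseq_aux n.+1 _ => hle2 hodd; split.
  by move: hle2; rewrite /t rseq_auxS !rs_le_cons => /andP [hy ->]; rewrite andbT; lia.
change (odd (k + sumn t) = odd (j + (k + sumn (rseq_aux n s2)))).
rewrite [odd (k + _)]oddD hodd [odd (j - 2 + _)]oddD oddB; last by lia.
rewrite [odd (j + _)]oddD [odd (k + _)]oddD.
by case: (odd j); case: (odd k); case: (odd (sumn _)).
Qed.

Section Positivity.
Local Open Scope ring_scope.
Local Notation "x %:F" := (@tofrac _ x).

Section PositiveAt.
Variable t : rat.

Definition pos_at (x : Qq) : Prop :=
  exists p q : {poly rat}, [/\ 0 < p.[t], 0 < q.[t] & x = p%:F / q%:F].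

Lemma tofrac_neq0 (p : {poly rat}) : 0 < p.[t] -> p%:F != 0 :> Qq.
Proof. by move=> hp; rewrite tofrac_eq0; apply: contraTneq hp => ->; rewrite horner0. Qed.

Lemma pos_at_neq0 x : pos_at x -> x != 0.
Proof. by case=> p [q [hp hq ->]]; rewrite mulf_neq0 ?invr_eq0 ?tofrac_neq0. Qed.

Lemma pos_at1 : pos_at 1.
Proof. by exists 1, 1; rewrite hornerC ltr01 divr1. Qed.

Lemma pos_atD x y : pos_at x -> pos_at y -> pos_at (x + y).
Proof.
case=> p [q [hp hq ->]] [p' [q' [hp' hq' ->]]].
exists (p * q' + p' * q), (q * q'); split.
- by rewrite hornerD !hornerM addr_gt0 ?mulr_gt0.
- by rewrite hornerM mulr_gt0.
- by rewrite addf_div ?tofrac_neq0 // tofracD !tofracM.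
Qed.

Lemma pos_atM x y : pos_at x -> pos_at y -> pos_at (x * y).
Proof.
case=> p [q [hp hq ->]] [p' [q' [hp' hq' ->]]].
exists (p * p'), (q * q'); split; rewrite ?hornerM ?mulr_gt0 //.
by rewrite mulf_div !tofracM.
Qed.

End PositiveAt.

Definition signed_pos (b : bool) (x : Qq) : Prop := pos_at 2 ((-1) ^+ b * x).

Lemma signed_pos_neq0 b x : signed_pos b x -> x != 0.
Proof. by move/pos_at_neq0; rewrite mulf_eq0 signr_eq0. Qed.

Lemma signed_posD b x y : signed_pos b x -> signed_pos b y -> signed_pos b (x + y).
Proof. by rewrite /signed_pos mulrDr; apply: pos_atD. Qed.

Lemma signed_posNM b c x : pos_at 2 c -> signed_pos b x -> signed_pos (~~ b) (- (c * x)).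
Proof. by rewrite /signed_pos signrN mulNr mulrN opprK mulrCA; apply: pos_atM. Qed.

Lemma DeltaSS k : Delta k.+2 = 'X * Delta k.+1 - Delta k.
Proof. by []. Qed.

Lemma Delta_at2 k : (Delta k).[2] = k.+1%:R.
Proof.
elim/ltn_ind: k => -[|[|k]] IH; rewrite ?hornerC ?hornerX //.
rewrite DeltaSS hornerD hornerN hornerM hornerX !IH //.
have natS i : i.+1%:R = i%:R + 1 :> rat by rewrite -addn1 natrD.
by rewrite !natS; ring.
Qed.

Lemma ratD_pos m : pos_at 2 (ratD m).
Proof. by exists (Delta (m - 2)), (Delta (m - 1)); rewrite !Delta_at2 !ltr0n. Qed.

End Positivity.

Lemma coeff_cons t v d :
  coeff (t :: v) d = ((if t.2 == d then t.1 else 0) + coeff v d)%R.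
Proof. by rewrite /coeff big_cons; case: ifP; rewrite ?add0r. Qed.

Lemma coeff_cat v w d : coeff (v ++ w) d = (coeff v d + coeff w d)%R.
Proof. by rewrite /coeff big_cat. Qed.

Lemma coeff_vscale c v d : coeff (vscale c v) d = (c * coeff v d)%R.
Proof. by rewrite /coeff big_map mulr_sumr. Qed.

Lemma coeff_vsub v w d : coeff (vsub v w) d = (coeff v d - coeff w d)%R.
Proof. by rewrite coeff_cat coeff_vscale mulN1r. Qed.

Lemma coeff_vl k v d : 0 < k -> all (fun t => k.-1 <= size t.2) v ->
  coeff (vl k v) d =
  if lk k (remove_arc k d) == d then coeff v (remove_arc k d) else 0%R.
Proof.
move=> k0; elim: v => [|t v IH] /=; first by rewrite /coeff !big_nil if_same.
case/andP => ht /IH {}IH; rewrite !coeff_cons IH.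
have -> : (lk k t.2 == d) = (t.2 == remove_arc k d) && (lk k (remove_arc k d) == d).
  by apply/eqP/andP => [<-|[/eqP -> /eqP //]]; rewrite lkK.
by case: eqP => _; case: eqP => _; rewrite /= ?addr0 ?add0r.
Qed.

Lemma eprime1 r : eprime (1 :: r) = vl 1 (eprime r).
Proof. by []. Qed.

Lemma eprimeSS m r : eprime (m.+2 :: r) =
  vsub (vl m.+2 (eprime r)) (vscale (ratD m.+2) (eprime (m.+1 :: r))).
Proof. by []. Qed.

Lemma eprime_size a : all (fun t => size t.2 == 2 * size a) (eprime a).
Proof.
elim: a => [|m r IH] //.
have hvl k : all (fun t => size t.2 == (2 * size r).+2) (vl k (eprime r)).
  by rewrite all_map; apply: sub_all IH => t /eqP ht; rewrite /= size_lk ht.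
rewrite /= mulnS add2n.
elim: m => [|[|m] IHm] //.
by rewrite /vsub all_cat hvl !all_map; exact: IHm.
Qed.

Definition signed_support (a d : seq nat) : Prop :=
  if rs_le (rseq_aux (size a) d) a
  then signed_pos (odd (sumn a + sumn (rseq_aux (size a) d))) (coeff (eprime a) d)
  else coeff (eprime a) d = 0%R.

Lemma odd_sumn_consK m a b : odd (sumn (m :: a) + (m + b)) = odd (sumn a + b).
Proof. by rewrite /= addnACA addnn oddD odd_double. Qed.

Section EprimeStep.
Variables (r d : seq nat).
Hypothesis hsupp : forall d', is_diagram (size r) d' -> signed_support r d'.
Hypothesis hd : is_diagram (size r).+1 d.

Let rho := rseq_aux (size r).+1 d.
Let parity a := odd (sumn a + sumn rho).

Lemma coeff_vl_eprimeE m : restricted (m :: r) ->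
  coeff (vl m (eprime r)) d =
  if lk m (remove_arc m d) == d then coeff (eprime r) (remove_arc m d) else 0%R.
Proof.
move=> hr; apply: coeff_vl (restricted_gt0 hr) _.
apply: sub_all (eprime_size r) => t /eqP ->.
have := restricted_head hr; lia.
Qed.

Lemma coeff_vl_eprime m : restricted (m :: r) ->
  let E := coeff (vl m (eprime r)) d in
  E = 0%R \/ (rs_le rho (m :: r) /\ signed_pos (parity (m :: r)) E).
Proof.
move=> hr /=; rewrite coeff_vl_eprimeE //; case: eqP => hlk; last by left.
have hd' : is_diagram (size r) (remove_arc m d).
  apply: (diagram_lk_inv (restricted_gt0 hr)); last by rewrite hlk.
  move: (diagram_size hd) (restricted_head hr); rewrite -{1}hlk size_lk; lia.
have := hsupp hd'; rewrite /signed_support; case: ifP => hle hsg; last by left.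
have [] := rseq_lk hd' erefl hle hr; rewrite hlk => hle' hodd.
by right; split; rewrite // /parity oddD hodd -oddD odd_sumn_consK.
Qed.

Lemma coeff_vl_eprime_first m : restricted (m :: r) ->
  first_adj d = m -> rs_le rho (m :: r) ->
  signed_pos (parity (m :: r)) (coeff (vl m (eprime r)) d).
Proof.
move=> hr hfa; rewrite /rho rseq_auxS hfa rs_le_cons leqnn /= => hle.
have m0 := restricted_gt0 hr.
have hm : partner d m = m.+1.
  rewrite -hfa partner_first_adj // hfa (diagram_size hd).
  have := restricted_head hr; lia.
have [hmat _] := andP hd.
rewrite coeff_vl_eprimeE // (remove_arcK hmat m0 hm) eqxx.
have := hsupp (diagram_remove_arc hd m0 hm); rewrite /signed_support hle.
by rewrite /parity /rho rseq_auxS hfa odd_sumn_consK.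
Qed.

Lemma signed_support_1 : restricted (1 :: r) -> signed_support (1 :: r) d.
Proof.
move=> hr; rewrite /signed_support eprime1 -/rho -/(parity _); case: ifP => hle.
  apply: coeff_vl_eprime_first => //.
  move: hle; rewrite /rho rseq_auxS rs_le_cons => /andP [h _].
  by apply/eqP; rewrite eqn_leq h.
by have [//|[]] := coeff_vl_eprime hr; rewrite /rho hle.
Qed.

Lemma signed_support_SS m : restricted (m.+2 :: r) ->
  signed_support (m.+1 :: r) d -> signed_support (m.+2 :: r) d.
Proof.
move=> hr; rewrite /signed_support eprimeSS coeff_vsub coeff_vscale -/rho.
set c := coeff (eprime (m.+1 :: r)) d.
have hpar : parity (m.+2 :: r) = ~~ parity (m.+1 :: r) by rewrite -oddS.
rewrite -!/(parity _) hpar.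
have [E0|[hleE hE]] := coeff_vl_eprime hr; last first.
  case: ifP => [hle1 hc|_ ->]; last by rewrite mulr0 subr0 hleE -hpar.
  by rewrite hleE addrC; apply: signed_posD => //; apply: signed_posNM (ratD_pos _) hc.
have hrho k : rs_le rho (k :: r) =
    (first_adj d <= k) && rs_le (rseq_aux (size r) (remove_arc (first_adj d) d)) r.
  by [].
rewrite E0 sub0r !hrho; case: (boolP (rs_le _ r)) => hX; rewrite ?andbT ?andbF.
  case: (ltngtP (first_adj d) m.+2) => hfa.
  - by rewrite -ltnS hfa => hc; apply: signed_posNM (ratD_pos _) hc.
  - by rewrite ifF ?(ltn_geF (ltnW hfa)) => // ->; rewrite mulr0 oppr0.
  - have := coeff_vl_eprime_first hr hfa; rewrite hrho hX hfa leqnn E0.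
    by move=> /(_ isT) /signed_pos_neq0; rewrite eqxx.
by move=> ->; rewrite mulr0 oppr0.
Qed.

End EprimeStep.

Lemma signed_support_nil : signed_support [::] [::].
Proof.
rewrite /signed_support /= /coeff big_cons big_nil eqxx addr0 /signed_pos expr0 mul1r.
exact: pos_at1.
Qed.

Lemma eprime_signed_support a d :
  restricted a -> is_diagram (size a) d -> signed_support a d.
Proof.
elim: a d => [|m r IH] d hr hd.
  by move: hd => /diagram_size /size0nil ->; apply: signed_support_nil.
have IHr d' := IH d' (restricted_tail hr).
elim: m hr hd => [|[|m] IHm] hr hd; first by have := restricted_gt0 hr.
  exact: signed_support_1.
apply: signed_support_SS => //.
by apply: IHm => //; apply: restricted_head_pred hr.
Qed.

Theorem mainTheorem10 (n : nat) (alpha : seq nat) :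
  (1 <= n)%N -> size alpha = n -> restricted alpha ->
  forall d : seq nat, is_diagram n d ->
    (coeff (eprime alpha) d != 0%R) = rs_le (rseq d) alpha.
Proof.
move=> _ hs hr d hd.
have hrseq : rseq d = rseq_aux n d by rewrite /rseq (diagram_size hd) mul2n doubleK.
have := eprime_signed_support hr; rewrite hs => /(_ d hd).
rewrite /signed_support hs -hrseq.
by case: ifP => _ hc; [apply: signed_pos_neq0 hc | rewrite hc eqxx].
Qed.
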